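(* Let $n = 2$, $\mathsf{AP}^I_L = \{i\}$ and $\mathsf{AP}^O = \{o\}$, so that $\mathcal{I} = 2^{\{i\}\times\{0,1\}}$ and $\mathcal{O} = 2^{\{o\}\times\{0,1\}}$. The set of all computation trees $\tau : \mathcal{I}^* \to \mathcal{O}$ that have the symmetry property is not a regular tree language.
   Context: For $u \subseteq \mathsf{AP}\times\{0,1\}$ and $k\in\mathbb{Z}$, $\mathrm{rot}(u,k) = \{(p,(j+k)\bmod 2) \mid (p,j)\in u\}$ (modulo always returns a value in $\{0,1\}$), extended letterwise to words. A computation tree is a map $\tau : \mathcal{I}^* \to \mathcal{O}$. It has the symmetry property if $\tau(\mathrm{rot}(t,k)) = \mathrm{rot}(\tau(t),k)$ for all $t\in\mathcal{I}^*$ and $k\in\{0,1\}$. A set of such trees is a regular tree language if it is the language of some finite tree automaton (e.g., with Muller acceptance condition) over $\mathcal{I}$-branching, $\mathcal{O}$-labelled infinite trees. *)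

From HB Require Import structures.
From mathcomp Require Import all_boot.
Set Implicit Arguments. Unset Strict Implicit. Unset Printing Implicit Defensive.

Inductive APi := ap_i.
Inductive APo := ap_o.
Definition APi_code (x : APi) : unit := tt.
Definition APi_decode (_ : unit) : APi := ap_i.
Lemma APi_codeK : cancel APi_code APi_decode. Proof. by case. Qed.
Definition APo_code (x : APo) : unit := tt.
Definition APo_decode (_ : unit) : APo := ap_o.
Lemma APo_codeK : cancel APo_code APo_decode. Proof. by case. Qed.
HB.instance Definition _ := Finite.copy APi (can_type APi_codeK).
HB.instance Definition _ := Finite.copy APo (can_type APo_codeK).

(* n = 2 : indices in {0,1} = 'I_2 *)
Definition rotj (k : nat) (j : 'I_2) : 'I_2 :=
  Ordinal (ltn_pmod (j + k) (isT : 0 < 2)).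

Definition rot (A : finType) (u : {set A * 'I_2}) (k : nat) : {set A * 'I_2} :=
  [set (x.1, rotj k x.2) | x in u].

Definition Inp := {set APi * 'I_2}.
Definition Outp := {set APo * 'I_2}.

Definition comp_tree := seq Inp -> Outp.

Definition rot_word (t : seq Inp) (k : nat) : seq Inp := map (fun u => rot u k) t.

Definition symmetry_property (tau : comp_tree) : Prop :=
  forall (t : seq Inp) (k : nat), k < 2 -> tau (rot_word t k) = rot (tau t) k.

(* Nondeterministic Muller tree automata over I-branching, O-labelled trees *)
Record muller_tree_aut := MTA {
  mta_state : finType;
  mta_init : mta_state;
  mta_delta : mta_state -> Outp -> {ffun Inp -> mta_state} -> bool;
  mta_table : {set {set mta_state}}
}.
Arguments mta_state : clear implicits.
Arguments mta_init : clear implicits.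
Arguments mta_table : clear implicits.
Arguments mta_delta : clear implicits.

Definition is_run (A : muller_tree_aut) (tau : comp_tree)
    (r : seq Inp -> mta_state A) : Prop :=
  r [::] = mta_init A /\
  forall w : seq Inp, mta_delta A (r w) (tau w) [ffun a => r (rcons w a)].

Definition prefix (pi : nat -> Inp) (m : nat) : seq Inp := mkseq pi m.

Definition inf_often (Q : Type) (r : seq Inp -> Q) (pi : nat -> Inp) (q : Q) : Prop :=
  forall N, exists m, N <= m /\ r (prefix pi m) = q.

Definition accepting_run (A : muller_tree_aut) (r : seq Inp -> mta_state A) : Prop :=
  forall pi : nat -> Inp, exists S, S \in mta_table A /\
    forall q, q \in S <-> inf_often r pi q.

Definition accepts (A : muller_tree_aut) (tau : comp_tree) : Prop :=
  exists r, @is_run A tau r /\ @accepting_run A r.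

Definition regular_tree_language (L : comp_tree -> Prop) : Prop :=
  exists A : muller_tree_aut, forall tau, accepts A tau <-> L tau.

From Pilot Require Import Defs.
From mathcomp Require Import all_boot.

Set Implicit Arguments.
Unset Strict Implicit.
Unset Printing Implicit Defensive.

(* The trees [level_tree n], which output everything at depth n+1 and nothing
   elsewhere, are all symmetric. An automaton with finitely many states
   accepting every symmetric tree reaches the same state at the child [a] of
   the root in accepting runs on two of them, say with depths i <> j. Grafting
   the run on the j-th tree below [a] into the run on the i-th tree yields an
   accepting run on the grafted tree, which is not symmetric: [a :: a^j] and
   its rotation leave the root through different children, one into each tree,
   and see different outputs at depth j+1. *)

Lemma rot_set0 (A : finType) (k : nat) : Defs.rot (set0 : {set A * 'I_2}) k = set0.
Proof. by rewrite /Defs.rot imset0. Qed.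

Lemma rot_setT (A : finType) (k : nat) :
  k < 2 -> Defs.rot (setT : {set A * 'I_2}) k = setT.
Proof.
move=> lt_k2; apply/setP => -[p j]; rewrite in_setT; apply/imsetP.
exists (p, rotj k j); rewrite ?in_setT //; congr pair; apply/val_inj.
by case: k lt_k2 => [|[|//]] _; case: j => [[|[|//]] ?].
Qed.

Definition level_tree (n : nat) : comp_tree :=
  fun w => if size w == n.+1 then setT else set0.

Lemma level_tree_sym (n : nat) : symmetry_property (level_tree n).
Proof.
move=> t k lt_k2; rewrite /level_tree /rot_word size_map.
by case: ifP => _; [rewrite rot_setT | rewrite rot_set0].
Qed.

Lemma eq_inf_often (Q : Type) (r r' : seq Inp -> Q) (pi : nat -> Inp) (q : Q) :
  (forall m, r (Defs.prefix pi m.+1) = r' (Defs.prefix pi m.+1)) ->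
  inf_often r pi q -> inf_often r' pi q.
Proof.
move=> eq_rr' r_inf N; have [[|m] [leNm rq]] := r_inf N.+1; first by [].
by exists m.+1; split; [exact: ltnW | rewrite -eq_rr'].
Qed.

Definition graft (T : Type) (a : Inp) (f g : seq Inp -> T) : seq Inp -> T :=
  fun w => if w is x :: _ then (if x == a then g w else f w) else f w.

Section Grafting.

Variables (A : muller_tree_aut) (a : Inp) (tau1 tau2 : comp_tree).
Variables (r1 r2 : seq Inp -> mta_state A).

Lemma graft_run :
  is_run tau1 r1 -> is_run tau2 r2 -> r1 [:: a] = r2 [:: a] ->
  is_run (graft a tau1 tau2) (graft a r1 r2).
Proof.
move=> [r1_init r1_step] [_ r2_step] r12a; split=> // -[|x w] /=.
  have -> : [ffun c => graft a r1 r2 [:: c]] = [ffun c => r1 [:: c]].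
    by apply/ffunP => c; rewrite !ffunE /=; case: eqP => // ->; rewrite r12a.
  exact: r1_step.
by case: (x == a); [exact: r2_step | exact: r1_step].
Qed.

Lemma graft_accepting :
  accepting_run r1 -> accepting_run r2 -> accepting_run (graft a r1 r2).
Proof.
move=> r1_acc r2_acc pi.
have r_acc : accepting_run (if pi 0 == a then r2 else r1) by case: (pi 0 == a).
have [S [S_tab S_inf]] := r_acc pi.
exists S; split=> // q; apply: iff_trans (S_inf q) _.
have eq_graft m : graft a r1 r2 (Defs.prefix pi m.+1)
    = (if pi 0 == a then r2 else r1) (Defs.prefix pi m.+1).
  by rewrite /Defs.prefix /mkseq /=; case: (pi 0 == a).
by split; apply: eq_inf_often => m; rewrite eq_graft.
Qed.

Lemma accepts_graft :
  is_run tau1 r1 -> accepting_run r1 -> is_run tau2 r2 -> accepting_run r2 ->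
  r1 [:: a] = r2 [:: a] -> accepts A (graft a tau1 tau2).
Proof.
move=> r1_run r1_acc r2_run r2_acc r12a.
by exists (graft a r1 r2); split; [apply: graft_run | apply: graft_accepting].
Qed.

End Grafting.

Lemma graft_level_tree_asym (a : Inp) (i j : nat) :
  Defs.rot a 1 != a -> i != j ->
  ~ symmetry_property (graft a (level_tree i) (level_tree j)).
Proof.
move=> /negbTE rot_a_neq neq_ij sym.
have := sym (a :: nseq j a) 1 isT.
rewrite /graft /= rot_a_neq eqxx /level_tree /rot_word /= size_map size_nseq.
rewrite eqSS eq_sym (negbTE neq_ij) eqxx rot_setT // => /setP /(_ (ap_o, ord0)).
by rewrite !inE.
Qed.

Definition a0 : Inp := [set (ap_i, ord0)].

Lemma rot_a0 : Defs.rot a0 1 != a0.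
Proof.
apply/eqP => rot_a0_eq.
have : (ap_i, ord0) \in Defs.rot a0 1 by rewrite rot_a0_eq set11.
by rewrite /Defs.rot /a0 imset_set1 inE.
Qed.

Lemma pigeonhole (D T : finType) (f : D -> T) :
  #|T| < #|D| -> exists i j, i != j /\ f i = f j.
Proof.
move=> lt_TD; have /injectivePn [i [j neq_ij eq_f]] : ~~ injectiveb f.
  by apply: contraL lt_TD => /injectiveP f_inj; rewrite -leqNgt (leq_card _ f_inj).
by exists i, j.
Qed.

Theorem lemma6 : ~ regular_tree_language symmetry_property.
Proof.
move=> [A acc_sym].
have [r r_acc] := fin_all_exists
  (fun n : 'I_#|mta_state A|.+1 => proj2 (acc_sym _) (level_tree_sym n)).
have lt_card : #|mta_state A| < #|'I_#|mta_state A|.+1| by rewrite card_ord.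
have [i [j [neq_ij eq_ra0]]] := pigeonhole (fun n => r n [:: a0]) lt_card.
apply: (graft_level_tree_asym rot_a0 neq_ij); apply/acc_sym.
by apply: (accepts_graft (r_acc i).1 (r_acc i).2 (r_acc j).1 (r_acc j).2).
Qed.
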